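(* For each $n\in\mathbb{N}$ let $D_n=\{(x,y)\in[0,n]^2: x\le y\}$, let $G_n:D_n\to\mathbb{R}$ be continuous, and let $(\mathcal{M}_1(n),\mathcal{M}_2(n))\in D_n$ be a point at which $G_n$ attains its maximum. Let $T=\{(x,y)\in\mathbb{R}^2: 0\le x\le y\le 1\}$ and define $h_n:T\to\mathbb{R}$ by $h_n(x,y)=G_n(nx,ny)$. Assume that $h_n$ converges uniformly on $T$ to a function $h$ and that $(\theta_1,\theta_2)$ is the only global maximum point of $h$ on $T$. Then: (i) $\lim_{n\to\infty}\mathcal{M}_i(n)/n=\theta_i$ for $i=1,2$; (ii) $\lim_{n\to\infty}G_n(\mathcal{M}_1(n),\mathcal{M}_2(n))=h(\theta_1,\theta_2)$; (iii) if $(\mathfrak{M}_1(n),\mathfrak{M}_2(n))\in D_n$ satisfy $\mathfrak{M}_i(n)\sim\mathcal{M}_i(n)$ (i.e. $\mathfrak{M}_i(n)/\mathcal{M}_i(n)\to1$) for $i=1,2$, then $\lim_{n\to\infty}G_n(\mathfrak{M}_1(n),\mathfrak{M}_2(n))=h(\theta_1,\theta_2)$. *)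

From Stdlib Require Import Reals.
Open Scope R_scope.

Definition inD (n : nat) (x y : R) : Prop :=
  0 <= x /\ x <= INR n /\ 0 <= y /\ y <= INR n /\ x <= y.

Definition inT (x y : R) : Prop := 0 <= x /\ x <= y /\ y <= 1.

Definition continuous_on2 (S : R -> R -> Prop) (f : R -> R -> R) : Prop :=
  forall x0 y0, S x0 y0 ->
  forall eps, 0 < eps -> exists delta, 0 < delta /\
    forall x y, S x y -> Rabs (x - x0) < delta -> Rabs (y - y0) < delta ->
      Rabs (f x y - f x0 y0) < eps.

Definition is_max_point (S : R -> R -> Prop) (f : R -> R -> R) (a b : R) : Prop :=
  S a b /\ forall x y, S x y -> f x y <= f a b.

Definition unif_cv_T (G : nat -> R -> R -> R) (h : R -> R -> R) : Prop :=
  forall eps, 0 < eps -> exists N : nat, forall n : nat, (N <= n)%nat ->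
    forall x y, inT x y -> Rabs (G n (INR n * x) (INR n * y) - h x y) < eps.

(** The rescaled functions [h_n(x, y) = G_n(n x, n y)] live on the fixed compact
    triangle [T], and [(M_1(n)/n, M_2(n)/n)] maximises [h_n] there.  Uniform
    convergence makes [h] continuous and forces [h(M(n)/n)] to the maximum of
    [h]; since a continuous function with a unique maximum point on a compact
    set can only come close to its maximum near that point, [M(n)/n] tends to
    [theta].  Conversely, any points [m(n)] of [D_n] with [m(n)/n -> theta] (in
    particular [m(n) ~ M(n)]) satisfy [G_n(m(n)) = h_n(m(n)/n) -> h(theta)]. *)

From Stdlib Require Import Reals Lra Lia Classical ClassicalEpsilon.
Open Scope R_scope.

Lemma inv_INR_S_lt (K k : nat) : (0 < K)%nat -> (K <= k)%nat -> / INR (S k) < / INR K.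
Proof.
  intros HK Hk. apply Rinv_lt_contravar.
  - apply Rmult_lt_0_compat; apply lt_0_INR; lia.
  - apply lt_INR; lia.
Qed.

Lemma le_of_close_le (a b : R) :
  (forall eps, 0 < eps -> exists u v, u <= v /\ Rabs (u - a) < eps /\ Rabs (v - b) < eps) ->
  a <= b.
Proof.
  intros Hclose. apply Rnot_lt_le; intros Hba.
  destruct (Hclose ((a - b) / 2)) as [u [v [Huv [Hu Hv]]]]; [lra|].
  apply Rabs_def2 in Hu. apply Rabs_def2 in Hv. lra.
Qed.

Definition cluster_point2 (x y : nat -> R) (a b : R) : Prop :=
  forall eps, 0 < eps -> forall N, exists p,
    (N <= p)%nat /\ Rabs (x p - a) < eps /\ Rabs (y p - b) < eps.

Lemma ValAdh_Rabs (u : nat -> R) (l : R) :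
  ValAdh u l -> forall eps, 0 < eps -> forall N, exists p, (N <= p)%nat /\ Rabs (u p - l) < eps.
Proof.
  intros Hl eps Heps N. apply (Hl (disc l (mkposreal eps Heps)) N).
  now exists (mkposreal eps Heps).
Qed.

Lemma bounded_cluster_point2 (x y : nat -> R) (lo hi : R) :
  (forall k, lo <= x k <= hi) -> (forall k, lo <= y k <= hi) ->
  exists a b, cluster_point2 x y a b.
Proof.
  intros Hx Hy.
  destruct (Bolzano_Weierstrass x _ (compact_P3 lo hi) Hx) as [a Ha].
  assert (Hsub : forall k, exists p, (k <= p)%nat /\ Rabs (x p - a) < / INR (S k)).
  { intros k. apply (ValAdh_Rabs _ _ Ha). apply Rinv_0_lt_compat, lt_0_INR. lia. }
  destruct (choice _ Hsub) as [q Hq].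
  destruct (Bolzano_Weierstrass (fun k => y (q k)) _ (compact_P3 lo hi) (fun k => Hy (q k)))
    as [b Hb].
  exists a, b. intros eps Heps N.
  destruct (archimed_cor1 eps Heps) as [K [HK HK0]].
  destruct (ValAdh_Rabs _ _ Hb eps Heps (N + K)) as [k [Hk Hyk]].
  destruct (Hq k) as [Hqk Hxk].
  exists (q k). repeat split; [lia| |exact Hyk].
  pose proof (inv_INR_S_lt K k HK0 ltac:(lia)). lra.
Qed.

Lemma cluster_point2_le (x y : nat -> R) (a b : R) :
  (forall k, x k <= y k) -> cluster_point2 x y a b -> a <= b.
Proof.
  intros Hxy Hcl. apply le_of_close_le. intros eps Heps.
  destruct (Hcl eps Heps 0%nat) as [p [_ [Hx Hy]]].
  now exists (x p), (y p).
Qed.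

Lemma cluster_point2_inT (x y : nat -> R) (a b : R) :
  (forall k, inT (x k) (y k)) -> cluster_point2 x y a b -> inT a b.
Proof.
  intros HT Hab.
  assert (Hx : cluster_point2 (fun _ => 0) x 0 a).
  { intros eps Heps N. destruct (Hab eps Heps N) as [p [Hp [Hxp _]]].
    exists p. rewrite Rminus_diag, Rabs_R0. auto. }
  assert (Hy : cluster_point2 y (fun _ => 1) b 1).
  { intros eps Heps N. destruct (Hab eps Heps N) as [p [Hp [_ Hyp]]].
    exists p. rewrite Rminus_diag, Rabs_R0. auto. }
  repeat split.
  - apply (cluster_point2_le _ _ _ _ (fun k => proj1 (HT k)) Hx).
  - apply (cluster_point2_le _ _ _ _ (fun k => proj1 (proj2 (HT k))) Hab).
  - apply (cluster_point2_le _ _ _ _ (fun k => proj2 (proj2 (HT k))) Hy).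
Qed.

Lemma cluster_point2_value_ge (D : R -> R -> Prop) (f : R -> R -> R) (x y : nat -> R)
  (a b c : R) :
  continuous_on2 D f -> D a b -> (forall k, D (x k) (y k)) -> cluster_point2 x y a b ->
  (forall k, c - / INR (S k) < f (x k) (y k)) -> c <= f a b.
Proof.
  intros Hf Hab HD Hcl Hc. apply Rnot_lt_le; intros Hlt.
  set (eta := (c - f a b) / 2).
  assert (Heta : 0 < eta) by (unfold eta; lra).
  destruct (Hf a b Hab eta Heta) as [d [Hd Hfd]].
  destruct (archimed_cor1 eta Heta) as [K [HK HK0]].
  destruct (Hcl d Hd K) as [p [Hp [Hxp Hyp]]].
  specialize (Hfd _ _ (HD p) Hxp Hyp). apply Rabs_def2 in Hfd.
  pose proof (inv_INR_S_lt K p HK0 Hp). specialize (Hc p).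
  unfold eta in *. lra.
Qed.

Lemma near_max_value_near_max_point (h : R -> R -> R) (th1 th2 : R) :
  continuous_on2 inT h -> is_max_point inT h th1 th2 ->
  (forall x y, is_max_point inT h x y -> x = th1 /\ y = th2) ->
  forall eps, 0 < eps -> exists d, 0 < d /\ forall x y, inT x y -> h th1 th2 - d < h x y ->
    Rabs (x - th1) < eps /\ Rabs (y - th2) < eps.
Proof.
  intros Hc [Hth Hmax] Huniq eps Heps.
  (* Otherwise a cluster point of almost maximising points far from [theta]
     would be a second maximum point. *)
  apply NNPP; intros Hno.
  assert (Hbad : forall k : nat, exists p : R * R,
             inT (fst p) (snd p) /\ h th1 th2 - / INR (S k) < h (fst p) (snd p) /\
             ~ (Rabs (fst p - th1) < eps /\ Rabs (snd p - th2) < eps)).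
  { intros k. apply NNPP; intros Hk. apply Hno.
    exists (/ INR (S k)). split; [apply Rinv_0_lt_compat, lt_0_INR; lia|].
    intros x y Hxy Hhxy. apply NNPP; intros Hfar. apply Hk. now exists (x, y). }
  destruct (choice _ Hbad) as [p Hp].
  set (x := fun k => fst (p k)). set (y := fun k => snd (p k)).
  assert (HT : forall k, inT (x k) (y k)) by (intros k; apply Hp).
  destruct (bounded_cluster_point2 x y 0 1) as [a [b Hab]];
    [intros k; destruct (HT k); lra ..|].
  assert (HTab : inT a b) by exact (cluster_point2_inT x y a b HT Hab).
  assert (Hge : h th1 th2 <= h a b)
    by (apply (cluster_point2_value_ge inT h x y); auto; intros k; apply Hp).
  destruct (Huniq a b) as [-> ->].
  { split; [exact HTab|]. intros x' y' Hxy'. specialize (Hmax _ _ Hxy'). lra. }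
  destruct (Hab eps Heps 0%nat) as [k [_ Hk]].
  exact (proj2 (proj2 (Hp k)) Hk).
Qed.

Lemma cv_to_unique_max_point (h : R -> R -> R) (th1 th2 : R) (x y : nat -> R) :
  continuous_on2 inT h -> is_max_point inT h th1 th2 ->
  (forall x y, is_max_point inT h x y -> x = th1 /\ y = th2) ->
  (forall n, inT (x n) (y n)) -> Un_cv (fun n => h (x n) (y n)) (h th1 th2) ->
  Un_cv x th1 /\ Un_cv y th2.
Proof.
  intros Hc Hth Huniq HT Hcv.
  assert (Hclose : forall eps, 0 < eps -> exists N, forall n, (N <= n)%nat ->
             Rabs (x n - th1) < eps /\ Rabs (y n - th2) < eps).
  { intros eps Heps.
    destruct (near_max_value_near_max_point h th1 th2 Hc Hth Huniq eps Heps) as [d [Hd Hnear]].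
    destruct (Hcv d Hd) as [N HN]. exists N. intros n Hn.
    apply Hnear; [apply HT|]. specialize (HN n Hn). apply Rabs_def2 in HN. lra. }
  split; intros eps Heps; destruct (Hclose eps Heps) as [N HN];
    exists N; intros n Hn; apply (HN n Hn).
Qed.

Lemma inD_scale (n : nat) (x y : R) : inT x y -> inD n (INR n * x) (INR n * y).
Proof. intros [Hx [Hxy Hy]]. pose proof (pos_INR n). repeat split; nra. Qed.

Lemma INR_mult_div (n : nat) (a : R) : (0 < n)%nat -> INR n * (a / INR n) = a.
Proof. intros Hn. apply lt_0_INR in Hn. field. lra. Qed.

(* For [n = 0] both quotients are [0] (division by zero), and [inT 0 0] holds. *)
Lemma inD_div_inT (n : nat) (a b : R) : inD n a b -> inT (a / INR n) (b / INR n).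
Proof.
  intros [Ha [Han [Hb [Hbn Hab]]]].
  destruct (Nat.eq_0_gt_0_cases n) as [-> | Hn].
  - rewrite !Rdiv_0_r. unfold inT. lra.
  - apply lt_0_INR in Hn. unfold inT, Rdiv.
    assert (0 < / INR n) by (apply Rinv_0_lt_compat; lra).
    assert (INR n * / INR n = 1) by (field; lra).
    repeat split; nra.
Qed.

Lemma continuous_on2_scale (D D' : R -> R -> Prop) (c : R) (f : R -> R -> R) :
  0 <= c -> (forall x y, D x y -> D' (c * x) (c * y)) ->
  continuous_on2 D' f -> continuous_on2 D (fun x y => f (c * x) (c * y)).
Proof.
  intros Hc HDD' Hf x0 y0 H0 eps Heps.
  destruct (Hf _ _ (HDD' _ _ H0) eps Heps) as [d [Hd Hfd]].
  exists (d / (c + 1)). split; [apply Rdiv_lt_0_compat; lra|].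
  assert (Hscale : forall u u0, Rabs (u - u0) < d / (c + 1) -> Rabs (c * u - c * u0) < d).
  { intros u u0 Hu. rewrite <- Rmult_minus_distr_l, Rabs_mult, Rabs_pos_eq by exact Hc.
    apply (Rmult_lt_compat_l (c + 1)) in Hu; [|lra].
    replace ((c + 1) * (d / (c + 1))) with d in Hu by (field; lra).
    pose proof (Rabs_pos (u - u0)). nra. }
  intros x y Hxy Hx Hy. apply Hfd; auto.
Qed.

Lemma continuous_on2_unif_approx (D : R -> R -> Prop) (h : R -> R -> R) :
  (forall eps, 0 < eps -> exists f, continuous_on2 D f /\
     forall x y, D x y -> Rabs (f x y - h x y) < eps) ->
  continuous_on2 D h.
Proof.
  intros Happrox x0 y0 H0 eps Heps.
  destruct (Happrox (eps / 3)) as [f [Hf Hfh]]; [lra|].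
  destruct (Hf x0 y0 H0 (eps / 3)) as [d [Hd Hfd]]; [lra|].
  exists d. split; [exact Hd|]. intros x y Hxy Hx Hy.
  pose proof (Hfd x y Hxy Hx Hy) as A. pose proof (Hfh x y Hxy) as B.
  pose proof (Hfh x0 y0 H0) as C.
  apply Rabs_def2 in A. apply Rabs_def2 in B. apply Rabs_def2 in C.
  apply Rabs_def1; lra.
Qed.

(* [a / b] is [0] when [b = 0], so the hypothesis [a / b -> 1] also keeps [b] away from [0]. *)
Lemma Un_cv_div_equiv (a b c : nat -> R) (l : R) :
  Un_cv (fun n => a n / b n) 1 -> Un_cv (fun n => b n / c n) l ->
  Un_cv (fun n => a n / c n) l.
Proof.
  intros Hab Hbc eps Heps.
  destruct (Hab (1 / 2)) as [N0 HN0]; [lra|].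
  pose proof (CV_mult _ _ _ _ Hab Hbc) as Hprod. rewrite Rmult_1_l in Hprod.
  destruct (Hprod eps Heps) as [N1 HN1].
  exists (max N0 N1). intros n Hn.
  assert (Hb : b n <> 0).
  { intros Hb0. specialize (HN0 n ltac:(lia)). unfold Rdist in HN0.
    rewrite Hb0, Rdiv_0_r in HN0. apply Rabs_def2 in HN0. lra. }
  replace (a n / c n) with (a n / b n * (b n / c n)).
  - apply HN1. lia.
  - unfold Rdiv. rewrite Rmult_assoc, <- (Rmult_assoc (/ b n)), Rinv_l, Rmult_1_l by exact Hb.
    reflexivity.
Qed.

Section RescaledLimit.

Variables (G : nat -> R -> R -> R) (h : R -> R -> R).
Hypothesis HGcont : forall n, continuous_on2 (inD n) (G n).
Hypothesis Hunif : unif_cv_T G h.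

Lemma unif_cv_T_continuous : continuous_on2 inT h.
Proof.
  apply continuous_on2_unif_approx. intros eps Heps.
  destruct (Hunif eps Heps) as [N HN].
  exists (fun x y => G N (INR N * x) (INR N * y)). split.
  - apply (continuous_on2_scale _ (inD N)); [apply pos_INR | apply inD_scale | apply HGcont].
  - intros x y Hxy. apply HN; auto.
Qed.

Lemma Un_cv_G_of_rescaled (m1 m2 : nat -> R) (a b : R) :
  inT a b -> (forall n, inD n (m1 n) (m2 n)) ->
  Un_cv (fun n => m1 n / INR n) a -> Un_cv (fun n => m2 n / INR n) b ->
  Un_cv (fun n => G n (m1 n) (m2 n)) (h a b).
Proof.
  intros Hab Hm Hcv1 Hcv2 eps Heps.
  destruct (unif_cv_T_continuous a b Hab (eps / 2)) as [d [Hd Hhd]]; [lra|].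
  destruct (Hcv1 d Hd) as [N1 HN1]. destruct (Hcv2 d Hd) as [N2 HN2].
  destruct (Hunif (eps / 2)) as [N3 HN3]; [lra|].
  exists (max (max N1 N2) (max N3 1)). intros n Hn.
  pose proof (inD_div_inT n _ _ (Hm n)) as HT.
  pose proof (Hhd _ _ HT (HN1 n ltac:(lia)) (HN2 n ltac:(lia))) as Hnear.
  pose proof (HN3 n ltac:(lia) _ _ HT) as Hunif_n.
  rewrite !INR_mult_div in Hunif_n by lia.
  unfold Rdist. apply Rabs_def2 in Hnear. apply Rabs_def2 in Hunif_n. apply Rabs_def1; lra.
Qed.

Section Maximizer.

Variables (M1 M2 : nat -> R) (th1 th2 : R).
Hypothesis HM : forall n, is_max_point (inD n) (G n) (M1 n) (M2 n).
Hypothesis Hth : is_max_point inT h th1 th2.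

(* [h (M/n) > h_n (M/n) - e = max h_n - e >= h_n theta - e > h theta - 2 e]. *)
Lemma rescaled_max_value_cv :
  Un_cv (fun n => h (M1 n / INR n) (M2 n / INR n)) (h th1 th2).
Proof.
  intros eps Heps. destruct (Hunif (eps / 2)) as [N HN]; [lra|].
  exists (max N 1). intros n Hn.
  destruct (HM n) as [HMn HMmax]. destruct Hth as [Hth_in Hth_max].
  pose proof (inD_div_inT n _ _ HMn) as HT.
  pose proof (HN n ltac:(lia) _ _ HT) as Hunif_M. rewrite !INR_mult_div in Hunif_M by lia.
  pose proof (HN n ltac:(lia) _ _ Hth_in) as Hunif_th.
  pose proof (HMmax _ _ (inD_scale n _ _ Hth_in)) as HGmax.
  pose proof (Hth_max _ _ HT) as Hhmax.
  unfold Rdist. apply Rabs_def2 in Hunif_M. apply Rabs_def2 in Hunif_th. apply Rabs_def1; lra.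
Qed.

End Maximizer.

End RescaledLimit.

Theorem proposition2
  (G : nat -> R -> R -> R) (M1 M2 : nat -> R) (h : R -> R -> R) (theta1 theta2 : R)
  (HGcont : forall n : nat, continuous_on2 (inD n) (G n))
  (HM : forall n : nat, is_max_point (inD n) (G n) (M1 n) (M2 n))
  (Hunif : unif_cv_T G h)
  (Htheta : is_max_point inT h theta1 theta2)
  (Huniq : forall x y, is_max_point inT h x y -> x = theta1 /\ y = theta2) :
  (Un_cv (fun n => M1 n / INR n) theta1 /\ Un_cv (fun n => M2 n / INR n) theta2)
  /\ Un_cv (fun n => G n (M1 n) (M2 n)) (h theta1 theta2)
  /\ (forall m1 m2 : nat -> R,
        (forall n : nat, inD n (m1 n) (m2 n)) ->
        Un_cv (fun n => m1 n / M1 n) 1 ->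
        Un_cv (fun n => m2 n / M2 n) 1 ->
        Un_cv (fun n => G n (m1 n) (m2 n)) (h theta1 theta2)).
Proof.
  assert (Hpoints : Un_cv (fun n => M1 n / INR n) theta1 /\
                    Un_cv (fun n => M2 n / INR n) theta2).
  { apply (cv_to_unique_max_point h); auto.
    - exact (unif_cv_T_continuous G h HGcont Hunif).
    - intros n. apply inD_div_inT, HM.
    - exact (rescaled_max_value_cv G h Hunif M1 M2 theta1 theta2 HM Htheta). }
  destruct Hpoints as [Hcv1 Hcv2].
  split; [auto|]. split.
  - apply (Un_cv_G_of_rescaled G); auto.
    + apply Htheta.
    + intros n. apply HM.
  - intros m1 m2 Hm Hequiv1 Hequiv2.
    apply (Un_cv_G_of_rescaled G); auto.
    + apply Htheta.
    + exact (Un_cv_div_equiv _ _ _ _ Hequiv1 Hcv1).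
    + exact (Un_cv_div_equiv _ _ _ _ Hequiv2 Hcv2).
Qed.
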